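(* Let $k\ge1$ and $n\ge2k+1$. In $U_q(\mathfrak{sl}_2)^{\otimes n}$, the element $\Lambda_{\{1,3,5,\dots,2k-1\}}$ commutes with $\Lambda_{[1;2k]}$ and with $\Lambda_{[1;2k-1]}$, and the element $\Lambda_{\{2,4,6,\dots,2k\}}$ commutes with $\Lambda_{[1;2k]}$ and with $\Lambda_{[1;2k+1]}$.
   Context: Let $\mathbb{K}$ be a field and $q\in\mathbb{K}$ not a root of unity. $U_q(\mathfrak{sl}_2)$ is the associative $\mathbb{K}$-algebra with generators $E,F,K,K^{-1}$ and relations $KK^{-1}=K^{-1}K=1$, $KE=q^2EK$, $KF=q^{-2}FK$, $EF-FE=\frac{K-K^{-1}}{q-q^{-1}}$, with Casimir element $\Lambda=(q-q^{-1})^2EF+q^{-1}K+qK^{-1}$ and coproduct $\Delta(E)=E\otimes1+K\otimes E$, $\Delta(F)=F\otimes K^{-1}+1\otimes F$, $\Delta(K^{\pm1})=K^{\pm1}\otimes K^{\pm1}$. $\mathcal{I}_R$ is the subalgebra generated by $EK^{-1},F,K^{-1},\Lambda$, with algebra morphism $\tau_R:\mathcal{I}_R\to U_q(\mathfrak{sl}_2)\otimes\mathcal{I}_R$: $\tau_R(EK^{-1})=K^{-1}\otimes EK^{-1}$, $\tau_R(F)=K\otimes F-q^{-3}(q-q^{-1})^2F^2K\otimes EK^{-1}+q^{-1}(q+q^{-1})FK\otimes K^{-1}-q^{-1}FK\otimes\Lambda$, $\tau_R(K^{-1})=1\otimes K^{-1}-q^{-1}(q-q^{-1})^2F\otimes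 EK^{-1}$, $\tau_R(\Lambda)=1\otimes\Lambda$. $[i;j]=\{i,\dots,j\}$; $1^{\otimes\ell}\otimes\varphi\otimes1^{\otimes m}$ applies $\varphi$ to tensor position $\ell+1$. For $A=\{a_1<\dots<a_m\}\subseteq[1;n]$, $\Lambda_A=1^{\otimes(a_1-1)}\otimes(\mu_m\circ\cdots\circ\mu_2)(\Lambda)\otimes1^{\otimes(n-a_m)}$ with $\mu_i=(1^{\otimes(a_i-a_1-1)}\otimes\tau_R)\circ\cdots\circ(1^{\otimes(a_{i-1}-a_1+1)}\otimes\tau_R)\circ(1^{\otimes(a_{i-1}-a_1)}\otimes\Delta)$ (no $\tau_R$ factors when $a_i=a_{i-1}+1$). *)

From HB Require Import structures.
From mathcomp Require Import all_boot all_order all_algebra.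
Set Implicit Arguments. Unset Strict Implicit. Unset Printing Implicit Defensive.
Import GRing.Theory.
Local Open Scope ring_scope.

Inductive genU := gE | gF | gK | gKi.

(* Generators of I_R: EK^{-1}, F, K^{-1}, Lambda. *)
Inductive genI := iEKi | iF | iKi | iL.

(* Formal non-commutative polynomial expressions over a field with
   generators in G (elements of the free K-algebra on G). *)
Inductive term (K : Type) (G : Type) :=
| tgen of G
| tcst of K
| tadd of term K G & term K G
| tmul of term K G & term K G.
Arguments tgen {K G}. Arguments tcst {K G}.
Arguments tadd {K G}. Arguments tmul {K G}.

Section Defs.
Variables (K : fieldType) (q : K).

Fixpoint teval (G : Type) (A : algType K) (v : G -> A) (t : term K G) : A :=
  match t with
  | tgen g => v g
  | tcst c => c%:A
  | tadd t1 t2 => teval v t1 + teval v t2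
  | tmul t1 t2 => teval v t1 * teval v t2
  end.

Fixpoint tsubst (G H : Type) (s : G -> term K H) (t : term K G) : term K H :=
  match t with
  | tgen g => s g
  | tcst c => tcst c
  | tadd t1 t2 => tadd (tsubst s t1) (tsubst s t2)
  | tmul t1 t2 => tmul (tsubst s t1) (tsubst s t2)
  end.

(* Generators of U_q(sl_2)^{(x) n}: (i, g) is the generator g in tensor
   position i (positions are numbered 1..n as in the paper). *)
Definition termU := term K (nat * genU).

Definition Uq_rels (n : nat) (A : algType K) (v : nat * genU -> A) : Prop :=
  (forall i, (1 <= i <= n)%N ->
     [/\ v (i, gK) * v (i, gKi) = 1,
         v (i, gKi) * v (i, gK) = 1,
         v (i, gK) * v (i, gE) = q ^+ 2 *: (v (i, gE) * v (i, gK)),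
         v (i, gK) * v (i, gF) = q ^- 2 *: (v (i, gF) * v (i, gK)) &
         v (i, gE) * v (i, gF) - v (i, gF) * v (i, gE)
           = (q - q^-1)^-1 *: (v (i, gK) - v (i, gKi))]) /\
  (forall i j g h, (1 <= i <= n)%N -> (1 <= j <= n)%N -> i != j ->
     v (i, g) * v (j, h) = v (j, h) * v (i, g)).

(* Equality in U_q(sl_2)^{(x) n} (= the free algebra modulo the ideal of
   the relations): two expressions are equal iff they agree under every
   relation-respecting evaluation in every K-algebra. *)
Definition Ueq (n : nat) (t1 t2 : termU) : Prop :=
  forall (A : algType K) (v : nat * genU -> A),
    Uq_rels n v -> teval v t1 = teval v t2.

(* Expressions in U^{(x) (p-1)} (x) I_R: U-generators in positions < p and
   I_R-generators in the last position p. *)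
Definition termM := term K ((nat * genU) + genI).

Definition uG (i : nat) (g : genU) : termM := tgen (inl (i, g)).
Definition iG (g : genI) : termM := tgen (inr g).
Definition uGU (i : nat) (g : genU) : termU := tgen (i, g).

Local Infix "+t" := tadd (at level 50, left associativity).
Local Infix "*t" := tmul (at level 40, left associativity).

Definition casimirAt (p : nat) : termU :=
  (tcst ((q - q^-1) ^+ 2) *t uGU p gE *t uGU p gF
   +t tcst (q^-1) *t uGU p gK +t tcst q *t uGU p gKi).

(* Embedding U^{(x)(p-1)} (x) I_R -> U^{(x) p}: I_R generators placed in
   position p. *)
Definition embed (p : nat) : termM -> termU :=
  tsubst (fun x => match x with
    | inl ig => tgen ig
    | inr iEKi => (uGU p gE *t uGU p gKi)
    | inr iF => uGU p gF
    | inr iKi => uGU p gKi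
    | inr iL => casimirAt p
    end).

(* 1^{(x)(p-1)} (x) Delta on the last factor (which lies in I_R, a left
   coideal: Delta(I_R) in U (x) I_R).  U-factor goes to position p, the
   I_R-factor becomes the new last position p+1.  The images are Delta of
   the generators of I_R, computed from Delta(E),Delta(F),Delta(K^{+-1}):
     Delta(EK^-1) = EK^-1 (x) K^-1 + 1 (x) EK^-1
     Delta(F)     = F (x) K^-1 + 1 (x) F
     Delta(K^-1)  = K^-1 (x) K^-1
     Delta(Lambda)= (q-q^-1)^2 (EF (x) K^-1 + E (x) F + KF (x) EK^-1)
                    + K (x) Lambda - q K (x) K^-1 + q K^-1 (x) K^-1  *)
Definition deltaM (p : nat) : termM -> termM :=
  tsubst (fun x => match x with
    | inl ig => tgen (inl ig)
    | inr iEKi => (uG p gE *t uG p gKi *t iG iKi +t iG iEKi)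
    | inr iF => (uG p gF *t iG iKi +t iG iF)
    | inr iKi => (uG p gKi *t iG iKi)
    | inr iL =>
        (tcst ((q - q^-1) ^+ 2) *t
           (uG p gE *t uG p gF *t iG iKi +t uG p gE *t iG iF
            +t uG p gK *t uG p gF *t iG iEKi)
         +t uG p gK *t iG iL +t tcst (- q) *t uG p gK *t iG iKi
         +t tcst q *t uG p gKi *t iG iKi)
    end).

(* 1^{(x)(p-1)} (x) tau_R on the last factor (position p); the
   U-factor stays in position p, the I_R-factor becomes position p+1. *)
Definition tauM (p : nat) : termM -> termM :=
  tsubst (fun x => match x with
    | inl ig => tgen (inl ig)
    | inr iEKi => (uG p gKi *t iG iEKi)
    | inr iF =>
        (uG p gK *t iG iF
         +t tcst (- (q ^- 3 * (q - q^-1) ^+ 2))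
             *t uG p gF *t uG p gF *t uG p gK *t iG iEKi
         +t tcst (q^-1 * (q + q^-1)) *t uG p gF *t uG p gK *t iG iKi
         +t tcst (- q^-1) *t uG p gF *t uG p gK *t iG iL)
    | inr iKi => (iG iKi +t tcst (- (q^-1 * (q - q^-1) ^+ 2)) *t uG p gF *t iG iEKi)
    | inr iL => iG iL
    end).

Fixpoint iter_tau (s m : nat) (w : termM) : termM :=
  match m with
  | 0 => w
  | m'.+1 => iter_tau s.+1 m' (tauM s w)
  end.

(* p = current last position (= a_{i-1}); the next element a of A gives
   mu_i: Delta at position p, then tau_R at positions p+1, ..., a-1. *)
Fixpoint buildLambda (p : nat) (w : termM) (rest : seq nat) : termU :=
  match rest with
  | [::] => embed p w
  | a :: rest' => buildLambda a (iter_tau p.+1 (a - p.+1) (deltaM p w)) rest'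
  end.

(* Lambda_A for A = {a_1 < ... < a_m} given as an increasing list;
   positions outside [a_1; a_m] carry 1 (implicitly: no generator). *)
Definition LambdaA (A : seq nat) : termU :=
  match A with
  | [::] => tcst 1
  | a1 :: rest => buildLambda a1 (iG iL) rest
  end.

End Defs.

Definition iseg (i j : nat) : seq nat := iota i (j.+1 - i).
Definition odds_upto (k : nat) : seq nat := [seq (2 * i).+1 | i <- iota 0 k].
Definition evens_upto (k : nat) : seq nat := [seq (2 * i).+2 | i <- iota 0 k].

(* Lambda_A is built from Lambda by coproducts and applications of tau_R in
   the positions up to max A.  Following this construction, Lambda_A commutes
   with the image Delta^(j)(U) of the iterated coproduct U -> U^{(x) j} for every
   j >= max A; since Lambda_[1;j] = Delta^(j)(Lambda) is a polynomial in
   Delta^(j)(E), Delta^(j)(F), Delta^(j)(K^{+-1}), the two elements commute.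
   The intermediate elements w of U^{(x) r} (x) I_R are linear in their last
   factor; the invariant is that the four coefficients of w commute with the
   factors beyond r and satisfy the relations [covariant] with
   Delta^(r)(E, F, K).  These relations are preserved by Delta and tau_R, and
   they make w commute with Delta^(r+1)(U) once its last factor is evaluated
   in U.  The finitely many noncommutative identities involved are checked by
   normalization modulo the defining relations. *)

From mathcomp Require Import all_boot all_order all_algebra.
From mathcomp Require Import ring zify.
Set Implicit Arguments. Unset Strict Implicit. Unset Printing Implicit Defensive.
Import GRing.Theory.
Local Open Scope ring_scope.

Lemma commrZ (K : fieldType) (A : algType K) (x y : A) (c : K) :
  GRing.comm x y -> GRing.comm x (c *: y).
Proof. by rewrite /GRing.comm -scalerAr -scalerAl => ->. Qed.

Lemma commr_inv (R : pzRingType) (x y z : R) :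
  y * z = 1 -> z * y = 1 -> GRing.comm x y -> GRing.comm x z.
Proof.
move=> yz zy xy; rewrite /GRing.comm -[x * z]mul1r -zy -mulrA (mulrA y) -xy.
by rewrite -!mulrA yz mulr1.
Qed.

Lemma in_seq4P (T : eqType) (P : T -> Prop) a b c d :
  {in [:: a; b; c; d], forall y, P y} <-> [/\ P a, P b, P c & P d].
Proof.
split=> [h | [? ? ? ?] y]; last by rewrite !inE => /or4P[]/eqP->.
by split; apply: h; rewrite !inE eqxx ?orbT.
Qed.

Ltac commr_auto :=
  repeat first [ apply: commrD | apply: commrB | apply: commrM | apply: commrN
               | apply: commrZ | apply: commr1 | apply: commr0 | assumption ].

(** * Normalization of noncommutative polynomials *)

Section NCNormalization.
Variables (K : fieldType) (A : algType K).

Inductive ncexpr :=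
| NCAtom of nat
| NCOne
| NCZero
| NCScale of K & ncexpr
| NCAdd of ncexpr & ncexpr
| NCMul of ncexpr & ncexpr
| NCOpp of ncexpr.

Fixpoint ncexpr_eval (env : seq A) (e : ncexpr) : A :=
  match e with
  | NCAtom i => nth 0 env i
  | NCOne => 1
  | NCZero => 0
  | NCScale c e => c *: ncexpr_eval env e
  | NCAdd e1 e2 => ncexpr_eval env e1 + ncexpr_eval env e2
  | NCMul e1 e2 => ncexpr_eval env e1 * ncexpr_eval env e2
  | NCOpp e => - ncexpr_eval env e
  end.

Definition ncpoly := seq (K * seq nat).

Definition word_eval (env : seq A) (w : seq nat) : A :=
  foldr (fun i x => nth 0 env i * x) 1 w.

Definition ncpoly_eval (env : seq A) (p : ncpoly) : A :=
  foldr (fun m x => m.1 *: word_eval env m.2 + x) 0 p.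

Definition ncpoly_scale (c : K) (p : ncpoly) : ncpoly :=
  [seq (c * m.1, m.2) | m <- p].

Definition ncpoly_mul (p1 p2 : ncpoly) : ncpoly :=
  [seq (m1.1 * m2.1, m1.2 ++ m2.2) | m1 <- p1, m2 <- p2].

Fixpoint ncexpr_norm (e : ncexpr) : ncpoly :=
  match e with
  | NCAtom i => [:: (1, [:: i])]
  | NCOne => [:: (1, [::])]
  | NCZero => [::]
  | NCScale c e => ncpoly_scale c (ncexpr_norm e)
  | NCAdd e1 e2 => ncexpr_norm e1 ++ ncexpr_norm e2
  | NCMul e1 e2 => ncpoly_mul (ncexpr_norm e1) (ncexpr_norm e2)
  | NCOpp e => ncpoly_scale (-1) (ncexpr_norm e)
  end.

Lemma word_eval_cat env w1 w2 :
  word_eval env (w1 ++ w2) = word_eval env w1 * word_eval env w2.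
Proof. by elim: w1 => [|i w IH] /=; rewrite ?mul1r // IH mulrA. Qed.

Lemma ncpoly_eval_cat env p1 p2 :
  ncpoly_eval env (p1 ++ p2) = ncpoly_eval env p1 + ncpoly_eval env p2.
Proof. by elim: p1 => [|m p IH] /=; rewrite ?add0r // IH addrA. Qed.

Lemma ncpoly_eval_scale env c p :
  ncpoly_eval env (ncpoly_scale c p) = c *: ncpoly_eval env p.
Proof. by elim: p => [|m p IH] /=; rewrite ?scaler0 // IH scalerDr scalerA. Qed.

Lemma ncpoly_eval_mul env p1 p2 :
  ncpoly_eval env (ncpoly_mul p1 p2) = ncpoly_eval env p1 * ncpoly_eval env p2.
Proof.
elim: p1 => [|m1 p1 IH] /=; first by rewrite mul0r.
rewrite ncpoly_eval_cat IH mulrDl; congr (_ + _).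
elim: p2 {IH} => [|m2 p2 IH] /=; first by rewrite mulr0.
rewrite IH word_eval_cat mulrDr; congr (_ + _).
by rewrite -scalerAl -scalerAr scalerA mulrC.
Qed.

Lemma ncexpr_normE env e : ncpoly_eval env (ncexpr_norm e) = ncexpr_eval env e.
Proof.
elim: e => [i|||c e IH|e1 IH1 e2 IH2|e1 IH1 e2 IH2|e IH] /=.
- by rewrite mulr1 scale1r addr0.
- by rewrite scale1r addr0.
- by [].
- by rewrite ncpoly_eval_scale IH.
- by rewrite ncpoly_eval_cat IH1 IH2.
- by rewrite ncpoly_eval_mul IH1 IH2.
- by rewrite ncpoly_eval_scale IH scaleN1r.
Qed.

(* A rule [(i, j, p)] rewrites the two-letter word [i j] into [p]. *)
Definition ncrule := (nat * nat * ncpoly)%type.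

Definition rule_holds (env : seq A) (r : ncrule) : Prop :=
  nth 0 env r.1.1 * nth 0 env r.1.2 = ncpoly_eval env r.2.

Definition rules_hold (env : seq A) (rs : seq ncrule) : Prop :=
  {in rs, forall r, rule_holds env r}.

Lemma rules_hold_all env rs :
  foldr (fun r P => rule_holds env r /\ P) True rs -> rules_hold env rs.
Proof.
elim: rs => [|r rs IH] //= [hr /IH hrs] r'.
by rewrite in_cons => /predU1P[->|/hrs].
Qed.

Fixpoint find_rule (i j : nat) (rs : seq ncrule) : option ncpoly :=
  if rs is r :: rs' then
    if eqn r.1.1 i && eqn r.1.2 j then Some r.2 else find_rule i j rs'
  else None.

Lemma find_ruleP env rs i j p : rules_hold env rs -> find_rule i j rs = Some p ->
  nth 0 env i * nth 0 env j = ncpoly_eval env p.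
Proof.
elim: rs => [|r rs IH] //= hold.
case: ifP => [/andP[/eqnP <- /eqnP <-] [<-]|_]; first by apply: hold; rewrite mem_head.
by apply: IH => r' r'_in; apply: hold; rewrite in_cons r'_in orbT.
Qed.

Definition rewrite_head (rs : seq ncrule) (w : seq nat) : option ncpoly :=
  if w is i :: j :: t then
    omap (fun p => [seq (m.1, m.2 ++ t) | m <- p]) (find_rule i j rs)
  else None.
Arguments rewrite_head : simpl never.

Fixpoint rewrite_word (rs : seq ncrule) (w : seq nat) : option ncpoly :=
  if w is i :: w' then
    if rewrite_head rs w is Some p then Some p
    else omap (fun p => [seq (m.1, i :: m.2) | m <- p]) (rewrite_word rs w')
  else None.

Section Rewriting.
Variables (env : seq A) (rs : seq ncrule).
Hypothesis hold : rules_hold env rs.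

Lemma rewrite_headP w p : rewrite_head rs w = Some p ->
  word_eval env w = ncpoly_eval env p.
Proof.
rewrite /rewrite_head; case: w => [|i [|j t]] //=; case hij: find_rule => [p'|] //= [<-].
rewrite mulrA (find_ruleP hold hij).
elim: p' {hij} => [|m p' IH] /=; first by rewrite mul0r.
by rewrite mulrDl IH word_eval_cat -scalerAl.
Qed.

Lemma rewrite_wordP w p : rewrite_word rs w = Some p ->
  word_eval env w = ncpoly_eval env p.
Proof.
elim: w p => [|i w IH] p //; rewrite [rewrite_word _ _]/=.
case hh: rewrite_head => [p'|]; first by move=> [<-]; exact: rewrite_headP.
case hw: rewrite_word => [p'|] //= [<-].
rewrite /= (IH _ hw); elim: p' {hw} => [|m p' IHp] /=; first by rewrite mulr0.
by rewrite mulrDr IHp scalerAr.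
Qed.
End Rewriting.

Definition rewrite_step (rs : seq ncrule) (p : ncpoly) : ncpoly :=
  flatten [seq if rewrite_word rs m.2 is Some p' then ncpoly_scale m.1 p' else [:: m]
          | m <- p].

Fixpoint eq_word (w1 w2 : seq nat) : bool :=
  match w1, w2 with
  | [::], [::] => true
  | i :: w1', j :: w2' => eqn i j && eq_word w1' w2'
  | _, _ => false
  end.

Fixpoint add_monomial (c : K) (w : seq nat) (p : ncpoly) : ncpoly :=
  if p is m :: p' then
    if eq_word w m.2 then (c + m.1, m.2) :: p' else m :: add_monomial c w p'
  else [:: (c, w)].

Definition collect (p : ncpoly) : ncpoly :=
  foldr (fun m p' => add_monomial m.1 m.2 p') [::] p.

Definition normalize (n : nat) (rs : seq ncrule) (p : ncpoly) : ncpoly :=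
  iter n (fun p' => collect (rewrite_step rs p')) (collect p).

Definition zero_coefs (p : ncpoly) : Prop := foldr (fun m P => m.1 = 0 /\ P) True p.

Lemma eq_wordP w1 w2 : eq_word w1 w2 -> w1 = w2.
Proof.
by elim: w1 w2 => [|i w1 IH] [|j w2] //= /andP[/eqnP -> /IH ->].
Qed.

Lemma add_monomialE env c w p :
  ncpoly_eval env (add_monomial c w p) = c *: word_eval env w + ncpoly_eval env p.
Proof.
elim: p => [|m p IH] //=; case: ifP => [/eq_wordP -> | _] /=.
  by rewrite scalerDl addrA.
by rewrite IH addrCA.
Qed.

Lemma collectE env p : ncpoly_eval env (collect p) = ncpoly_eval env p.
Proof. by elim: p => [|m p IH] //=; rewrite add_monomialE IH. Qed.

Lemma rewrite_stepE env rs p : rules_hold env rs ->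
  ncpoly_eval env (rewrite_step rs p) = ncpoly_eval env p.
Proof.
move=> hold; elim: p => [|m p IH] //=; rewrite ncpoly_eval_cat IH.
case hw: rewrite_word => [p'|] /=; last by rewrite addr0.
by rewrite ncpoly_eval_scale -(rewrite_wordP hold hw).
Qed.

Lemma normalizeE env n rs p : rules_hold env rs ->
  ncpoly_eval env (normalize n rs p) = ncpoly_eval env p.
Proof.
move=> hold; rewrite /normalize; elim: n => [|n IH] /=; first exact: collectE.
by rewrite collectE rewrite_stepE.
Qed.

Lemma zero_coefsE env p : zero_coefs p -> ncpoly_eval env p = 0.
Proof. by elim: p => [|m p IH] //= [-> /IH ->]; rewrite scale0r add0r. Qed.

Lemma ncexpr_eq_by_normalize env rs n e1 e2 : rules_hold env rs ->
  zero_coefs (normalize n rs (ncexpr_norm (NCAdd e1 (NCOpp e2)))) ->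
  ncexpr_eval env e1 = ncexpr_eval env e2.
Proof.
move=> hold /(zero_coefsE env); rewrite normalizeE // ncexpr_normE /=.
by move/eqP; rewrite subr_eq0 => /eqP.
Qed.

Definition comm_rules (m n : nat) : seq ncrule :=
  [seq (j, i, [:: (1, [:: i; j])]) | i <- iota 0 m, j <- iota m n].

Lemma comm_rules_hold env m :
  {in take m env & drop m env, forall y z, GRing.comm y z} ->
  rules_hold env (comm_rules m (size env - m)).
Proof.
move=> hcomm r /allpairsP[[i j] [/=]]; rewrite !mem_iota add0n.
move=> /andP[_ hi] /andP[hj hjn] ->.
have hm : (m < size env)%N.
  by rewrite -subn_gt0 -(ltn_add2l m) addn0 (leq_ltn_trans hj hjn).
rewrite /rule_holds /= mulr1 scale1r addr0; apply/esym/hcomm.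
  by rewrite -(nth_take 0 hi) mem_nth // size_takel // ltnW.
by rewrite -(subnKC hj) -nth_drop mem_nth // size_drop ltn_subLR.
Qed.

Lemma rules_hold_nil env : rules_hold env [::].
Proof. by []. Qed.

Lemma rules_hold_cat env rs1 rs2 :
  rules_hold env rs1 -> rules_hold env rs2 -> rules_hold env (rs1 ++ rs2).
Proof. by move=> h1 h2 r; rewrite mem_cat => /orP[/h1|/h2]. Qed.

End NCNormalization.
Arguments comm_rules {K}.

Ltac nc_index x env :=
  lazymatch env with
  | x :: _ => constr:(0%N)
  | _ :: ?env' => let i := nc_index x env' in constr:(i.+1)
  end.

Ltac nc_reify K env t :=
  lazymatch t with
  | @GRing.add _ ?x ?y =>
      let r1 := nc_reify K env x in let r2 := nc_reify K env y in constr:(@NCAdd K r1 r2)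
  | @GRing.mul _ ?x ?y =>
      let r1 := nc_reify K env x in let r2 := nc_reify K env y in constr:(@NCMul K r1 r2)
  | @GRing.opp _ ?x => let r := nc_reify K env x in constr:(@NCOpp K r)
  | @GRing.scale _ _ ?c ?x => let r := nc_reify K env x in constr:(@NCScale K c r)
  | @GRing.one _ => constr:(@NCOne K)
  | @GRing.zero _ => constr:(@NCZero K)
  | _ => let i := nc_index t env in constr:(@NCAtom K i)
  end.

(* Proves an equation between noncommutative polynomials in the atoms [env],
   given [hold : rules_hold env rs], by normalizing modulo [rs] in at most [n]
   passes; leaves one scalar goal per surviving monomial. *)
Ltac nc_normalize K env rs n hold :=
  lazymatch goal with
  | |- ?l = ?r =>
    let e1 := nc_reify K env l in let e2 := nc_reify K env r in
    change (ncexpr_eval env e1 = ncexpr_eval env e2);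
    apply: (@ncexpr_eq_by_normalize K _ env rs n e1 e2 hold);
    lazy beta iota zeta delta [zero_coefs normalize iter collect add_monomial
      eq_word eqn rewrite_step rewrite_word rewrite_head find_rule omap obind oapp
      comm_rules iota ncexpr_norm ncpoly_scale ncpoly_mul flatten foldr map cat andb fst snd];
    repeat split
  end.

Ltac nc_ring K env := nc_normalize K env (@nil (ncrule K)) 0%N (rules_hold_nil env).

(** * One step of the construction of Lambda_A *)

Section UqRelations.
Variables (K : fieldType) (q : K) (A : algType K).
Hypothesis hq0 : q != 0.

Definition uq_rel (e f k ki : A) : Prop :=
  [/\ k * ki = 1, ki * k = 1, k * e = q ^+ 2 *: (e * k), k * f = q ^- 2 *: (f * k) &
      e * f - f * e = (q - q^-1)^-1 *: (k - ki)].

Lemma uq_rel_Kinv e f k ki : uq_rel e f k ki ->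
  ki * e = q ^- 2 *: (e * ki) /\ ki * f = q ^+ 2 *: (f * ki).
Proof.
move=> [kki kik ke kf _].
suff conj_ki x c : c != 0 -> k * x = c *: (x * k) -> ki * x = c^-1 *: (x * ki).
  by split; [apply: conj_ki ke | rewrite -[q ^+ 2]invrK; apply: conj_ki kf];
    rewrite ?invr_eq0 expf_neq0.
move=> c0 kx; apply: (canRL (scalerK c0)).
by rewrite -[RHS]mul1r -kik -mulrA (mulrA k) kx -scalerAl -mulrA kki mulr1 -scalerAr.
Qed.

(* Rules ordering the letters [e < f < k < ki] stored at [i, ..., i + 3]. *)
Definition uq_rules (i : nat) : seq (ncrule K) :=
  [:: (i.+1, i, [:: (1, [:: i; i.+1]); (- (q - q^-1)^-1, [:: i.+2]);
                   ((q - q^-1)^-1, [:: i.+3])]);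
      (i.+2, i, [:: (q ^+ 2, [:: i; i.+2])]);
      (i.+3, i, [:: (q ^- 2, [:: i; i.+3])]);
      (i.+2, i.+1, [:: (q ^- 2, [:: i.+1; i.+2])]);
      (i.+3, i.+1, [:: (q ^+ 2, [:: i.+1; i.+3])]);
      (i.+2, i.+3, [:: (1, [::])]);
      (i.+3, i.+2, [:: (1, [::])])].

Lemma uq_rules_hold (env : seq A) i :
  uq_rel (nth 0 env i) (nth 0 env i.+1) (nth 0 env i.+2) (nth 0 env i.+3) ->
  rules_hold env (uq_rules i).
Proof.
move=> h; have [kie kif] := uq_rel_Kinv h; case: h => kki kik ke kf ef.
apply: rules_hold_all; rewrite /rule_holds /= !(mulr1, scale1r, addr0).
do !split=> //.
rewrite scaleNr (addrC (- _)) -scalerBr -(opprB (nth 0 env i.+2)) scalerN -ef.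
by rewrite opprB addrC subrK.
Qed.
End UqRelations.

Section LastFactor.
Variables (K : fieldType) (q : K) (A : algType K).
Hypotheses (hq0 : q != 0) (hq2 : q * q - 1 != 0).

(* An element w = a (x) EK^-1 + b (x) F + c (x) K^-1 + d (x) Lambda of
   U^{(x) r} (x) I_R, linear in its last factor, is given by (a, b, c, d). *)
Record coefs := Coefs { cEKi : A; cF : A; cKi : A; cL : A }.

Definition coef_seq (x : coefs) : seq A := [:: cEKi x; cF x; cKi x; cL x].

Definition casimir (e f k ki : A) : A :=
  (q - q^-1) ^+ 2 *: (e * f) + q^-1 *: k + q *: ki.

Definition close_last (x : coefs) (e f k ki : A) : A :=
  cEKi x * (e * ki) + cF x * f + cKi x * ki + cL x * casimir e f k ki.

(* The coefficients of (1 (x) Delta) w and of (1 (x) tau_R) w, where e, f, k, ki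
   are the generators of the factor inserted before the last one. *)
Definition coproduct_coefs (x : coefs) (e f k ki : A) : coefs :=
  Coefs (cEKi x + (q - q^-1) ^+ 2 *: (cL x * k * f))
        (cF x + (q - q^-1) ^+ 2 *: (cL x * e))
        (cEKi x * e * ki + cF x * f + cKi x * ki
         + cL x * ((q - q^-1) ^+ 2 *: (e * f) - q *: k + q *: ki))
        (cL x * k).

Definition tau_coefs (x : coefs) (e f k ki : A) : coefs :=
  Coefs (cEKi x * ki - q^-1 * (q - q^-1) ^+ 2 *: (cKi x * f)
         - q ^- 3 * (q - q^-1) ^+ 2 *: (cF x * f * f * k))
        (cF x * k)
        (cKi x + q^-1 * (q + q^-1) *: (cF x * f * k))
        (cL x - q^-1 *: (cF x * f * k)).

(* The coefficients of Delta(Lambda) in U (x) I_R, with the U-factor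
   represented by E, F, K, K^-1. *)
Definition casimir_coefs (E F Kp Ki : A) : coefs :=
  Coefs ((q - q^-1) ^+ 2 *: (Kp * F)) ((q - q^-1) ^+ 2 *: E)
        ((q - q^-1) ^+ 2 *: (E * F) - q *: Kp + q *: Ki) Kp.

(* Relations with the first legs E, F, K of a coproduct under which w commutes
   with that coproduct once its last factor is evaluated ([close_last_comm]);
   Delta and tau_R preserve them. *)
Definition covariant (x : coefs) (E F Kp : A) : Prop :=
  [/\ [/\ Kp * cEKi x = q ^- 2 *: (cEKi x * Kp), Kp * cF x = q ^+ 2 *: (cF x * Kp),
          Kp * cKi x = cKi x * Kp & Kp * cL x = cL x * Kp],
      [/\ E * cEKi x = cEKi x * E - (1 - q ^- 2) *: (cKi x * Kp), E * cF x = cF x * E,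
          E * cKi x = cKi x * E + (q ^+ 2 + 1) / (q - q^-1) *: (cF x * Kp) &
          E * cL x = cL x * E - q / (q - q^-1) *: (cF x * Kp)] &
      [/\ F * cEKi x = q ^+ 2 *: (cEKi x * F),
          F * cF x = q ^- 2 *: (cF x * F) + (1 - q ^- 2) *: cKi x,
          F * cKi x = cKi x * F - (q ^+ 2 + 1) / (q - q^-1) *: cEKi x &
          F * cL x = cL x * F + q / (q - q^-1) *: cEKi x]].

(* [covariant] as rules on the letters cEKi, cF, cKi, cL, E, F, K = 0, ..., 6. *)
Definition covariant_rules : seq (ncrule K) :=
  [:: (6%N, 0%N, [:: (q ^- 2, [:: 0%N; 6%N])]);
      (6%N, 1%N, [:: (q ^+ 2, [:: 1%N; 6%N])]);
      (6%N, 2%N, [:: (1, [:: 2%N; 6%N])]);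
      (6%N, 3%N, [:: (1, [:: 3%N; 6%N])]);
      (4%N, 0%N, [:: (1, [:: 0%N; 4%N]); (- (1 - q ^- 2), [:: 2%N; 6%N])]);
      (4%N, 1%N, [:: (1, [:: 1%N; 4%N])]);
      (4%N, 2%N, [:: (1, [:: 2%N; 4%N]); ((q ^+ 2 + 1) / (q - q^-1), [:: 1%N; 6%N])]);
      (4%N, 3%N, [:: (1, [:: 3%N; 4%N]); (- (q / (q - q^-1)), [:: 1%N; 6%N])]);
      (5%N, 0%N, [:: (q ^+ 2, [:: 0%N; 5%N])]);
      (5%N, 1%N, [:: (q ^- 2, [:: 1%N; 5%N]); (1 - q ^- 2, [:: 2%N])]);
      (5%N, 2%N, [:: (1, [:: 2%N; 5%N]); (- ((q ^+ 2 + 1) / (q - q^-1)), [:: 0%N])]);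
      (5%N, 3%N, [:: (1, [:: 3%N; 5%N]); (q / (q - q^-1), [:: 0%N])])].

Lemma covariant_rules_hold x E F Kp (env : seq A) : covariant x E F Kp ->
  rules_hold ([:: cEKi x; cF x; cKi x; cL x; E; F; Kp] ++ env) covariant_rules.
Proof.
case=> [[? ? ? ?] [? ? ? ?] [? ? ? ?]]; apply: rules_hold_all.
by rewrite /rule_holds /= !(mulr1, addr0, scale1r, scaleNr); do !split.
Qed.

Section CoproductStep.
Variables (x : coefs) (E F Kp e f k ki : A).
Hypotheses (uq_efk : uq_rel q e f k ki) (cov : covariant x E F Kp).
Hypothesis comm_last :
  {in coef_seq x ++ [:: E; F; Kp] & [:: e; f; k; ki], forall y z, GRing.comm y z}.

Lemma last_rules_hold :
  rules_hold [:: cEKi x; cF x; cKi x; cL x; E; F; Kp; e; f; k; ki]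
    (covariant_rules ++ comm_rules 7 4 ++ uq_rules q 7).
Proof.
apply: rules_hold_cat; last apply: rules_hold_cat.
- exact: covariant_rules_hold.
- exact: comm_rules_hold.
- exact: uq_rules_hold.
Qed.

Ltac nc_last :=
  let rs := eval unfold covariant_rules, uq_rules in
    (covariant_rules ++ comm_rules 7 4 ++ uq_rules q 7) in
  nc_normalize K [:: cEKi x; cF x; cKi x; cL x; E; F; Kp; e; f; k; ki] rs 40%N
    last_rules_hold; field; rewrite ?hq0 ?hq2 //.

Lemma close_last_comm :
  [/\ GRing.comm (close_last x e f k ki) (E + Kp * e),
      GRing.comm (close_last x e f k ki) (F * ki + f) &
      GRing.comm (close_last x e f k ki) (Kp * k)].
Proof. by rewrite /close_last /casimir /GRing.comm; split; nc_last. Qed.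

Lemma coproduct_covariant :
  covariant (coproduct_coefs x e f k ki) (E + Kp * e) (F * ki + f) (Kp * k).
Proof. by rewrite /covariant /=; do !split; nc_last. Qed.

Lemma tau_covariant :
  covariant (tau_coefs x e f k ki) (E + Kp * e) (F * ki + f) (Kp * k).
Proof. by rewrite /covariant /=; do !split; nc_last. Qed.
End CoproductStep.

Section CoproductCasimir.
Variables (E F Kp Ki e f k ki : A).
Hypothesis uq_efk : uq_rel q e f k ki.
Hypothesis comm_last :
  {in [:: E; F; Kp; Ki] & [:: e; f; k; ki], forall y z, GRing.comm y z}.

Lemma casimir_rules_hold :
  rules_hold [:: E; F; Kp; Ki; e; f; k; ki] (comm_rules 4 4 ++ uq_rules q 4).
Proof. by apply: rules_hold_cat; [exact: comm_rules_hold | exact: uq_rules_hold]. Qed.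

Ltac nc_casimir :=
  let rs := eval unfold uq_rules in (comm_rules 4 4 ++ uq_rules q 4) in
  nc_normalize K [:: E; F; Kp; Ki; e; f; k; ki] rs 40%N casimir_rules_hold;
    field; rewrite ?hq0 ?hq2 //.

Lemma coproduct_casimir_coefs :
  coproduct_coefs (casimir_coefs E F Kp Ki) e f k ki
  = casimir_coefs (E + Kp * e) (F * ki + f) (Kp * k) (Ki * ki).
Proof. by rewrite /coproduct_coefs /casimir_coefs /=; congr Coefs; nc_casimir. Qed.

Lemma close_last_casimir_coefs :
  close_last (casimir_coefs E F Kp Ki) e f k ki
  = casimir (E + Kp * e) (F * ki + f) (Kp * k) (Ki * ki).
Proof. by rewrite /close_last /casimir /=; nc_casimir. Qed.
End CoproductCasimir.
End LastFactor.

(** * The tensor power U^{(x) n} *)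

Section TermEval.
Variables (K : fieldType) (A : algType K).

Lemma teval_tsubst (G H : Type) (u : H -> A) (s : G -> term K H) (t : term K G) :
  teval u (tsubst s t) = teval (fun g => teval u (s g)) t.
Proof. by elim: t => //= t1 -> t2 ->. Qed.

Lemma eq_teval (G : Type) (u1 u2 : G -> A) (t : term K G) :
  u1 =1 u2 -> teval u1 t = teval u2 t.
Proof. by move=> eq_u; elim: t => //= t1 -> t2 ->. Qed.
End TermEval.

Section TensorPower.
Variables (K : fieldType) (q : K) (A : algType K) (n : nat) (v : nat * genU -> A).
Hypothesis hrel : Uq_rels q n v.

Lemma uq_rel_next r : (r < n)%N ->
  uq_rel q (v (r.+1, gE)) (v (r.+1, gF)) (v (r.+1, gK)) (v (r.+1, gKi)).
Proof. by move=> /(hrel.1 r.+1)[]. Qed.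

Definition commutes_above r (y : A) :=
  forall i g, (r < i <= n)%N -> GRing.comm (v (i, g)) y.

Lemma commutes_above_gen r i g : (0 < i <= r)%N -> commutes_above r (v (i, g)).
Proof. by move=> hi j h hj; apply: hrel.2; lia. Qed.

(* The images of E, F, K, K^-1 under the iterated coproduct U -> U^{(x) r},
   occupying positions 1..r. *)
Fixpoint DeltaK r := if r is r'.+1 then DeltaK r' * v (r, gK) else 1.
Fixpoint DeltaKi r := if r is r'.+1 then DeltaKi r' * v (r, gKi) else 1.
Fixpoint DeltaE r := if r is r'.+1 then DeltaE r' + DeltaK r' * v (r, gE) else 0.
Fixpoint DeltaF r := if r is r'.+1 then DeltaF r' * v (r, gKi) + v (r, gF) else 0.

Definition Delta_seq r := [:: DeltaE r; DeltaF r; DeltaK r; DeltaKi r].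

Lemma Delta_above r : {in Delta_seq r, forall y, commutes_above r y}.
Proof.
apply/in_seq4P; elim: r => [|r [hE hF hK hKi]]; first by split=> i g _ /=; commr_auto.
split=> i g hi /=.
all: have hri : (r < i <= n)%N by lia.
all: have hv h : GRing.comm (v (i, g)) (v (r.+1, h)) by apply: commutes_above_gen hi; lia.
all: move: (hE i g hri) (hF i g hri) (hK i g hri) (hKi i g hri).
all: by move: (hv gE) (hv gF) (hv gK) (hv gKi) => *; commr_auto.
Qed.

Lemma DeltaK_inv r : (r <= n)%N -> DeltaK r * DeltaKi r = 1 /\ DeltaKi r * DeltaK r = 1.
Proof.
elim: r => [|r IH] hr /=; first by rewrite mulr1.
have [IH1 IH2] := IH (ltnW hr).
have [kki kik _ _ _] := uq_rel_next hr.
have hr1 : (r < r.+1 <= n)%N by rewrite ltnSn.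
have /in_seq4P[_ _ cKiK cKKi] := Delta_above (r := r).
move: (cKKi _ gK hr1) (cKiK _ gKi hr1) => {}cKKi {}cKiK.
split; rewrite mulrA -(mulrA _ (v _)) ?cKKi ?cKiK mulrA ?IH1 ?IH2 mul1r //.
Qed.

Definition Delta_central j (X : A) :=
  [/\ GRing.comm X (DeltaE j), GRing.comm X (DeltaF j),
      GRing.comm X (DeltaK j) & GRing.comm X (DeltaKi j)].

Lemma Delta_central_up j j' X : (j <= j' <= n)%N ->
  commutes_above j X -> Delta_central j X -> Delta_central j' X.
Proof.
move=> /andP[]; elim: j' => [|j' IH] hj hj' hX hc.
  by move: hc; rewrite leqn0 in hj; rewrite (eqP hj).
case: (ltngtP j j'.+1) hj => // [hlt _ | <- _]; last exact: hc.
have [hE hF hK hKi] := IH hlt (ltnW hj') hX hc.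
have hv g : GRing.comm X (v (j'.+1, g)) by apply/commr_sym/hX; lia.
by move: (hv gE) (hv gF) (hv gK) (hv gKi) => *; split=> /=; commr_auto.
Qed.

Lemma casimir_comm j X : Delta_central j X ->
  GRing.comm X (casimir q (DeltaE j) (DeltaF j) (DeltaK j) (DeltaKi j)).
Proof. by case=> *; rewrite /casimir; commr_auto. Qed.

Hypotheses (hq0 : q != 0) (hq2 : q * q - 1 != 0).

Definition with_last (y : genI -> A) (g : (nat * genU) + genI) : A :=
  match g with inl ig => v ig | inr h => y h end.

Definition has_coefs (w : termM K) (x : coefs A) :=
  forall y, teval (with_last y) w
            = cEKi x * y iEKi + cF x * y iF + cKi x * y iKi + cL x * y iL.

Lemma has_coefs_tsubst (H : Type) (u : H -> A) s w x : has_coefs w x ->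
  (forall ig, teval u (s (inl ig)) = v ig) ->
  teval u (tsubst s w) = cEKi x * teval u (s (inr iEKi)) + cF x * teval u (s (inr iF))
                         + cKi x * teval u (s (inr iKi)) + cL x * teval u (s (inr iL)).
Proof.
move=> hw hs; rewrite teval_tsubst -(hw (fun h => teval u (s (inr h)))).
by apply: eq_teval; case.
Qed.

Lemma has_coefs_delta p w x : has_coefs w x ->
  has_coefs (deltaM q p w)
    (coproduct_coefs q x (v (p, gE)) (v (p, gF)) (v (p, gK)) (v (p, gKi))).
Proof.
move=> hw y; rewrite /deltaM (has_coefs_tsubst hw) //= /coproduct_coefs /=.
by nc_ring K [:: cEKi x; cF x; cKi x; cL x; v (p, gE); v (p, gF); v (p, gK); v (p, gKi);
  y iEKi; y iF; y iKi; y iL]; ring.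
Qed.

Lemma has_coefs_tau p w x : has_coefs w x ->
  has_coefs (tauM q p w) (tau_coefs q x (v (p, gE)) (v (p, gF)) (v (p, gK)) (v (p, gKi))).
Proof.
move=> hw y; rewrite /tauM (has_coefs_tsubst hw) //= /tau_coefs /=.
by nc_ring K [:: cEKi x; cF x; cKi x; cL x; v (p, gE); v (p, gF); v (p, gK); v (p, gKi);
  y iEKi; y iF; y iKi; y iL]; field; rewrite ?hq0 //.
Qed.

Lemma teval_embed p w x : has_coefs w x ->
  teval v (embed q p w) = close_last q x (v (p, gE)) (v (p, gF)) (v (p, gK)) (v (p, gKi)).
Proof.
move=> hw; rewrite /embed (has_coefs_tsubst hw) //= /close_last /casimir.
by rewrite -!scalerAl !mul1r.
Qed.

Definition admissible r (w : termM K) :=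
  exists x, [/\ has_coefs w x, {in coef_seq x, forall y, commutes_above r y}
              & covariant q x (DeltaE r) (DeltaF r) (DeltaK r)].

Section NextFactor.
Variables (r : nat) (x : coefs A).
Hypotheses (hr : (r < n)%N) (hx : {in coef_seq x, forall y, commutes_above r y}).

Lemma next_factor_comm :
  {in coef_seq x ++ [:: DeltaE r; DeltaF r; DeltaK r]
    & [:: v (r.+1, gE); v (r.+1, gF); v (r.+1, gK); v (r.+1, gKi)],
    forall y z, GRing.comm y z}.
Proof.
move=> y z hy; have {}hy : commutes_above r y.
  move: hy; rewrite mem_cat => /orP[/hx //|]; rewrite !inE => hy.
  by apply: Delta_above; rewrite !inE; case/or3P: hy => ->; rewrite ?orbT.
by rewrite !inE => /or4P[]/eqP->; apply/commr_sym/hy; rewrite ltnSn.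
Qed.

Lemma next_factor_above i g : (r.+1 < i <= n)%N ->
  [/\ [/\ GRing.comm (v (i, g)) (cEKi x), GRing.comm (v (i, g)) (cF x),
          GRing.comm (v (i, g)) (cKi x) & GRing.comm (v (i, g)) (cL x)] &
      [/\ GRing.comm (v (i, g)) (v (r.+1, gE)), GRing.comm (v (i, g)) (v (r.+1, gF)),
          GRing.comm (v (i, g)) (v (r.+1, gK)) & GRing.comm (v (i, g)) (v (r.+1, gKi))]].
Proof.
move=> hi; have /in_seq4P[ha hb hc hd] := hx.
have hv h : commutes_above r.+1 (v (r.+1, h)) by apply: commutes_above_gen; lia.
have hi' : (r < i <= n)%N by lia.
by split; split; [apply: ha | apply: hb | apply: hc | apply: hd | apply: hv ..].
Qed.
End NextFactor.

Lemma admissible_init r : admissible r (iG K iL).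
Proof.
exists (Coefs 0 0 0 1); split.
- by move=> y /=; rewrite !mul0r !add0r mul1r.
- by apply/in_seq4P; split=> i g _; [exact: commr0 .. | exact: commr1].
- by rewrite /covariant /= !(mul0r, mulr0, mul1r, mulr1, scaler0, subr0, addr0).
Qed.

Lemma admissible_delta r w : (r < n)%N ->
  admissible r w -> admissible r.+1 (deltaM q r.+1 w).
Proof.
move=> hr [x [hw hx hcov]].
exists (coproduct_coefs q x (v (r.+1, gE)) (v (r.+1, gF)) (v (r.+1, gK)) (v (r.+1, gKi))).
split; first exact: has_coefs_delta.
  apply/in_seq4P; split=> i g /(next_factor_above hr hx g)[[? ? ? ?] [? ? ? ?]] /=.
  all: commr_auto.
exact (coproduct_covariant hq0 hq2 (uq_rel_next hr) hcov (next_factor_comm hr hx)).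
Qed.

Lemma admissible_tau r w : (r < n)%N ->
  admissible r w -> admissible r.+1 (tauM q r.+1 w).
Proof.
move=> hr [x [hw hx hcov]].
exists (tau_coefs q x (v (r.+1, gE)) (v (r.+1, gF)) (v (r.+1, gK)) (v (r.+1, gKi))).
split; first exact: has_coefs_tau.
  apply/in_seq4P; split=> i g /(next_factor_above hr hx g)[[? ? ? ?] [? ? ? ?]] /=.
  all: commr_auto.
exact (tau_covariant hq0 hq2 (uq_rel_next hr) hcov (next_factor_comm hr hx)).
Qed.

Lemma admissible_iter_tau m r w : (r + m <= n)%N ->
  admissible r w -> admissible (r + m) (iter_tau q r.+1 m w).
Proof.
elim: m r w => [|m IH] r w hm hw; first by rewrite addn0.
by rewrite /= -addSnnS; apply: IH; [rewrite addSnnS | apply: admissible_tau hw; lia].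
Qed.

Lemma admissible_central r w j : (r < j <= n)%N -> admissible r w ->
  Delta_central j (teval v (embed q r.+1 w)).
Proof.
move=> hj [x [hw hx hcov]]; have hr : (r < n)%N by lia.
rewrite (teval_embed _ hw); apply: (Delta_central_up (j := r.+1)) => //.
  move=> i g /(next_factor_above hr hx g)[[? ? ? ?] [? ? ? ?]].
  by rewrite /close_last /casimir; commr_auto.
have [cE cF cK] := close_last_comm hq0 hq2 (uq_rel_next hr) hcov (next_factor_comm hr hx).
have [KKi KiK] := DeltaK_inv hr.
by split=> //; apply: commr_inv cK.
Qed.

Lemma buildLambda_central rest r w j : (r < j <= n)%N -> admissible r w ->
  path ltn r.+1 rest -> all (fun a => a <= j)%N rest ->
  Delta_central j (teval v (buildLambda q r.+1 w rest)).
Proof.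
elim: rest r w => [|a rest IH] r w hj hw /=; first by move=> *; exact: admissible_central.
move=> /andP[ha hp] /andP[haj hall].
have hw' : admissible (r.+1 + (a - r.+2)) (iter_tau q r.+2 (a - r.+2) (deltaM q r.+1 w)).
  by apply: admissible_iter_tau; [lia | apply: admissible_delta hw; lia].
have hj' : (r.+1 + (a - r.+2) < j <= n)%N by lia.
have ea : (r.+1 + (a - r.+2)).+1 = a by lia.
by move: (IH _ _ hj' hw'); rewrite ea; apply.
Qed.

Lemma LambdaA_central s j : (j <= n)%N -> sorted ltn s -> all (fun a => 0 < a <= j)%N s ->
  Delta_central j (teval v (LambdaA q s)).
Proof.
case: s => [|a rest] hj /=.
  by rewrite scale1r; split; apply/commr_sym/commr1.
move=> hp /andP[/andP[a0 aj] hall]; rewrite -(prednK a0).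
apply: buildLambda_central (admissible_init _) _ _; first lia.
  by rewrite prednK.
by apply: sub_all hall => b /andP[].
Qed.

Definition Delta_casimir_coefs r :=
  casimir_coefs q (DeltaE r) (DeltaF r) (DeltaK r) (DeltaKi r).

Lemma has_coefs_Delta_casimir_next r w : (r < n)%N ->
  has_coefs w (Delta_casimir_coefs r) ->
  has_coefs (deltaM q r.+1 w) (Delta_casimir_coefs r.+1).
Proof.
move=> hr /(has_coefs_delta r.+1).
rewrite coproduct_casimir_coefs //; first exact: uq_rel_next.
move=> y z /Delta_above hy; rewrite !inE => /or4P[]/eqP->; apply/commr_sym/hy; lia.
Qed.

Lemma buildLambda_iseg m r w : (r + m < n)%N -> has_coefs w (Delta_casimir_coefs r) ->
  teval v (buildLambda q r.+1 w (iota r.+2 m))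
  = casimir q (DeltaE (r + m).+1) (DeltaF (r + m).+1) (DeltaK (r + m).+1) (DeltaKi (r + m).+1).
Proof.
elim: m r w => [|m IH] r w hm hw.
  rewrite addn0 in hm *; rewrite /= (teval_embed _ hw) close_last_casimir_coefs //.
    exact: uq_rel_next.
  move=> y z /Delta_above hy; rewrite !inE => /or4P[]/eqP->; apply/commr_sym/hy; lia.
rewrite /= subnn -addSnnS; apply: IH; first by rewrite addSnnS.
by apply: has_coefs_Delta_casimir_next => //; lia.
Qed.

Lemma LambdaA_iseg j : (0 < j <= n)%N ->
  teval v (LambdaA q (iseg 1 j)) = casimir q (DeltaE j) (DeltaF j) (DeltaK j) (DeltaKi j).
Proof.
case: j => [|j] // hj; rewrite /iseg subSS subn0 /=.
rewrite (buildLambda_iseg (r := 0)) //.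
move=> y; rewrite /Delta_casimir_coefs /casimir_coefs /=.
by rewrite !(mul0r, mulr0, scaler0, sub0r, add0r, addNr, mul1r).
Qed.
End TensorPower.

Lemma odds_upto_sorted k : sorted ltn (odds_upto k).
Proof. by rewrite sorted_map; apply: sub_sorted (iota_ltn_sorted 0 k) => a b /=; lia. Qed.

Lemma evens_upto_sorted k : sorted ltn (evens_upto k).
Proof. by rewrite sorted_map; apply: sub_sorted (iota_ltn_sorted 0 k) => a b /=; lia. Qed.

Lemma odds_upto_range k j : (2 * k - 1 <= j)%N -> all (fun a => 0 < a <= j)%N (odds_upto k).
Proof. by move=> hj; apply/allP => a /mapP[i]; rewrite mem_iota => hi ->; lia. Qed.

Lemma evens_upto_range k j : (2 * k <= j)%N -> all (fun a => 0 < a <= j)%N (evens_upto k).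
Proof. by move=> hj; apply/allP => a /mapP[i]; rewrite mem_iota => hi ->; lia. Qed.

Lemma LambdaA_comm_iseg (K : fieldType) (q : K) (hq0 : q != 0) (hq2 : q * q - 1 != 0)
    n s j : (0 < j <= n)%N -> sorted ltn s -> all (fun a => 0 < a <= j)%N s ->
  Ueq q n (tmul (LambdaA q s) (LambdaA q (iseg 1 j)))
          (tmul (LambdaA q (iseg 1 j)) (LambdaA q s)).
Proof.
move=> hj hs hall A v hrel /=; rewrite (LambdaA_iseg hrel hq0) //.
by apply: casimir_comm; apply: (LambdaA_central hrel hq0 hq2) => //; lia.
Qed.

Theorem lemma5p1 (K : fieldType) (q : K)
  (hq0 : q != 0) (hq : forall m : nat, (0 < m)%N -> q ^+ m != 1)
  (k n : nat) (hk : (1 <= k)%N) (hn : (2 * k + 1 <= n)%N) :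
  let L := LambdaA q in
  let comm X Y := Ueq q n (tmul X Y) (tmul Y X) in
  [/\ comm (L (odds_upto k)) (L (iseg 1 (2 * k))%N),
      comm (L (odds_upto k)) (L (iseg 1 (2 * k - 1))%N),
      comm (L (evens_upto k)) (L (iseg 1 (2 * k))%N) &
      comm (L (evens_upto k)) (L (iseg 1 (2 * k + 1))%N)].
Proof.
have hq2 : q * q - 1 != 0 by rewrite subr_eq0 -expr2 hq.
split; apply: LambdaA_comm_iseg => //;
  by [lia | apply: odds_upto_sorted | apply: evens_upto_sorted
      | apply: odds_upto_range; lia | apply: evens_upto_range; lia].
Qed.
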